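(* Let $a_1,\dots,a_n$ be nonzero integers and suppose the equation $$a_1x_1+\cdots+a_nx_n=0$$ is $r$-regular. Let $C$ be a positive constant. Then for every coloring of the positive integers $\mathbb{N}$ with $r$ colors, there exist positive integers $x_1,\dots,x_n$ satisfying $a_1x_1+\cdots+a_nx_n=0$ and a positive integer $d$ such that all the numbers $$x_i+\lambda d,\qquad 1\le i\le n,\ \lambda\in\mathbb{Z},\ |\lambda|\le C,$$ have the same color.
   Context: For a positive integer $r$, a linear homogeneous equation $a_1x_1+\cdots+a_nx_n=0$ with nonzero integer coefficients is called $r$-regular if for every coloring of the positive integers with $r$ colors there exist positive integers $x_1,\dots,x_n$, all of the same color, satisfying the equation. *)

From Stdlib Require Import ZArith List Reals.
Import ListNotations.
Open Scope Z_scope.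

Fixpoint lin_form (a x : list Z) : Z :=
  match a, x with
  | ai :: a', xi :: x' => ai * xi + lin_form a' x'
  | _, _ => 0
  end.

(* An r-coloring of the positive integers: c : Z -> nat with c x < r for x > 0
   (values at non-positive integers are irrelevant). *)
Definition coloring (r : nat) (c : Z -> nat) : Prop :=
  forall x, 0 < x -> (c x < r)%nat.

Definition r_regular (r : nat) (a : list Z) : Prop :=
  forall c : Z -> nat, coloring r c ->
    exists x : list Z,
      length x = length a /\ Forall (fun y => 0 < y) x /\
      lin_form a x = 0 /\
      exists k : nat, Forall (fun y => c y = k) x.

(* By compactness, r-regularity already provides a monochromatic solution in
   [1, M] for a fixed [M], whatever the colouring.  Van der Waerden's theorem
   (proved by colour focusing), applied to the colouring [t |-> (c (j t))_(j <= M)],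
   yields [b] and [e] such that [c (y b + lam e) = c (y b)] for all [y <= M] and
   [|lam| <= C]; [e] is a multiple of [M!], so [lam e] is a multiple of [y].
   A monochromatic solution [x] in [1, M] of the colouring [y |-> c (y b)] then
   gives the solution [b x] and the common difference [e]. *)

From Stdlib Require Import ZArith List Reals.
From Stdlib Require Import Lia Factorial Classical ClassicalEpsilon Lra.
Import ListNotations.
Open Scope Z_scope.

Section VanDerWaerden.
Local Open Scope nat_scope.

Definition mono_ap {T} (c : nat -> T) (k a d : nat) : Prop :=
  forall i, i < k -> c (a + i * d) = c a.

Definition vdw_holds (k : nat) : Prop :=
  forall (T : Type) (cols : list T), exists W, forall c : nat -> T,
    (forall t, In (c t) cols) ->
    exists a d, 0 < d /\ a + k * d <= W /\ mono_ap c k a d.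

Fixpoint words {T} (m : nat) (cols : list T) : list (list T) :=
  match m with
  | 0 => [[]]
  | S m' => flat_map (fun x => map (cons x) (words m' cols)) cols
  end.

Lemma in_words {T} (cols : list T) m l :
  length l = m -> incl l cols -> In l (words m cols).
Proof.
  revert m; induction l as [|x l IH]; intros m Hm Hincl; subst m; simpl; auto.
  apply in_flat_map. exists x. split; [apply Hincl; simpl; auto|].
  apply in_map, IH; [reflexivity|]. intros y Hy; apply Hincl; simpl; auto.
Qed.

Lemma map_seq_inv {T} (g h : nat -> T) m s :
  map g (seq s m) = map h (seq s m) -> forall t, s <= t < s + m -> g t = h t.
Proof.
  revert s; induction m as [|m IH]; intros s E t Ht; [lia|].
  simpl in E. injection E as E1 E2.
  destruct (Nat.eq_dec t s) as [->|Hne]; auto.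
  apply (IH (S s)); auto; lia.
Qed.

Lemma injective_colors_le_length {T} (cols : list T) (n : nat) (g : nat -> T) :
  (forall j, j < n -> In (g j) cols) ->
  (forall j j', j < n -> j' < n -> j <> j' -> g j <> g j') -> n <= length cols.
Proof.
  intros Hin Hinj.
  replace n with (length (map g (seq 0 n))) by now rewrite length_map, length_seq.
  apply NoDup_incl_length.
  - apply NoDup_map_NoDup_ForallPairs; [|apply seq_NoDup].
    intros x y Hx Hy E. apply in_seq in Hx, Hy.
    destruct (Nat.eq_dec x y); auto. exfalso; apply (Hinj x y); auto; lia.
  - intros z Hz. apply in_map_iff in Hz. destruct Hz as [j [<- Hj]].
    apply in_seq in Hj. apply Hin; lia.
Qed.

(* Van der Waerden applied to the colouring [b |-> (f b t)_(s <= t < s+m)],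
   whose colours are the words of length [m] over [cols]. *)
Lemma vdw_columns k m s {T} (cols : list T) : vdw_holds k ->
  exists W, forall f : nat -> nat -> T,
    (forall b t, s <= t < s + m -> In (f b t) cols) ->
    exists a d, 0 < d /\ a + k * d <= W /\
      forall i t, i < k -> s <= t < s + m -> f (a + i * d) t = f a t.
Proof.
  intros Hv. destruct (Hv _ (words m cols)) as [W HW]. exists W. intros f Hf.
  destruct (HW (fun b => map (f b) (seq s m))) as [a [d [Hd [HaW Hmono]]]].
  { intros b. apply in_words; [now rewrite length_map, length_seq|].
    intros y Hy. apply in_map_iff in Hy. destruct Hy as [t [<- Ht]].
    apply Hf, in_seq, Ht. }
  exists a, d. split; [exact Hd|split; [exact HaW|]].
  intros i t Hi Ht. exact (map_seq_inv _ _ m s (Hmono i Hi) t Ht).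
Qed.

Lemma vdw1 : vdw_holds 1.
Proof.
  intros T cols. exists 1. intros c _. exists 0, 1. split; [lia|split; [lia|]].
  intros i Hi. replace i with 0 by lia. reflexivity.
Qed.

Lemma mono_ap_shift {T} (c : nat -> T) b k a d :
  mono_ap (fun t => c (b + t)) k a d -> mono_ap c k (b + a) d.
Proof. intros H i Hi. rewrite <- Nat.add_assoc. apply (H i Hi). Qed.

Definition focused {T} (c : nat -> T) k s f (A D : nat -> nat) : Prop :=
  forall j, j < s -> 0 < D j /\ A j + k * D j = f /\ mono_ap c k (A j) (D j) /\
    forall j', j' < s -> j' <> j -> c (A j') <> c (A j).

Lemma focused_hit {T} (c : nat -> T) k s f A D j :
  focused c k s f A D -> j < s -> c (A j) = c f -> mono_ap c (S k) (A j) (D j).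
Proof.
  intros Hfoc Hj Hcol i Hi. destruct (Hfoc j Hj) as [_ [Hf [Hm _]]].
  destruct (Nat.eq_dec i k) as [->|Hik]; [now rewrite Hf|apply Hm; lia].
Qed.

Lemma focused_miss_lt_length {T} (cols : list T) (c : nat -> T) k s f A D :
  (forall t, In (c t) cols) -> focused c k s f A D ->
  (forall j, j < s -> c (A j) <> c f) -> s < length cols.
Proof.
  intros Hc Hfoc Hmiss.
  apply (injective_colors_le_length cols (S s)
    (fun j => if Nat.eq_dec j s then c f else c (A j))).
  - intros j _. destruct (Nat.eq_dec j s); auto.
  - intros j j' Hj Hj' Hne.
    destruct (Nat.eq_dec j s) as [->|Hjs]; destruct (Nat.eq_dec j' s) as [->|Hj's];
      try lia.
    + intros E. apply (Hmiss j'); [lia|auto].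
    + apply Hmiss; lia.
    + destruct (Hfoc j' ltac:(lia)) as [_ [_ [_ Hd]]]. apply Hd; lia.
Qed.

(* Inside a block-progression [B*(b + i*e) + [0,B)] of identically coloured
   blocks, a focused family of block [b] is lengthened by the step [B*e], and
   the focus of block [b] becomes the start of one more progression. *)
Lemma focused_extend {T} (c : nat -> T) k s f A D B b e :
  0 < e -> f < B ->
  (forall i t, i < k -> t < B -> c (B * (b + i * e) + t) = c (B * b + t)) ->
  focused (fun t => c (B * b + t)) k s f A D ->
  (forall j, j < s -> c (B * b + A j) <> c (B * b + f)) ->
  focused c k (S s) (B * (b + k * e) + f)
    (fun j => if Nat.eq_dec j s then B * b + f else B * b + A j)
    (fun j => if Nat.eq_dec j s then B * e else D j + B * e).
Proof.
  intros He Hf Hblk Hfoc Hmiss j Hj.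
  destruct (Nat.eq_dec j s) as [Hjs|Hjs].
  - split; [nia|split; [nia|split]].
    + intros i Hi. rewrite <- (Hblk i f Hi Hf). f_equal. nia.
    + intros j' Hj' Hne. destruct (Nat.eq_dec j' s) as [|_]; [lia|].
      apply Hmiss; lia.
  - destruct (Hfoc j ltac:(lia)) as [HD [HAf [Hm Hdist]]].
    split; [lia|split; [nia|split]].
    + intros i Hi. rewrite <- (Hm i Hi), <- (Hblk i (A j + i * D j) Hi) by nia.
      f_equal. nia.
    + intros j' Hj' Hne. destruct (Nat.eq_dec j' s) as [->|Hj's].
      * intros E. apply (Hmiss j); [lia|auto].
      * apply (Hdist j'); lia.
Qed.

Definition focusing k {T} (cols : list T) s : Prop :=
  exists N, 0 < N /\ forall c : nat -> T, (forall t, In (c t) cols) ->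
    (exists a d, 0 < d /\ a + S k * d <= 4 * N /\ mono_ap c (S k) a d) \/
    (exists f A D, f < 2 * N /\ focused c k s f A D).

Lemma focusing0 k {T} (cols : list T) : focusing k cols 0.
Proof.
  exists 1. split; [lia|]. intros c _. right. exists 0, (fun _ => 0), (fun _ => 0).
  split; [lia|]. intros j Hj; lia.
Qed.

Lemma focusing_step k {T} (cols : list T) s : 1 <= k -> vdw_holds k ->
  focusing k cols s -> focusing k cols (S s).
Proof.
  intros Hk Hv [N [HN HF]].
  destruct (vdw_columns k (2 * N) 0 cols Hv) as [M HM].
  exists (2 * N * (M + 1)). split; [nia|]. intros c Hc.
  destruct (HM (fun b t => c (2 * N * b + t)) (fun _ _ _ => Hc _))
    as [b [e [He [HbM Hblk]]]].
  set (cb := fun t => c (2 * N * b + t)).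
  destruct (HF cb (fun _ => Hc _)) as [[a [d [Hd [HaN Hm]]]] | [f [A [D [Hf Hfoc]]]]].
  - left. exists (2 * N * b + a), d. split; [exact Hd|split; [nia|]].
    now apply mono_ap_shift.
  - destruct (classic (exists j, j < s /\ cb (A j) = cb f)) as [[j [Hj Hhit]]|Hmiss].
    + left. destruct (Hfoc j Hj) as [HD [HAf _]].
      exists (2 * N * b + A j), (D j). split; [exact HD|split; [nia|]].
      apply mono_ap_shift, (focused_hit cb k s f A D j Hfoc Hj Hhit).
    + right. eexists _, _, _. split; cycle 1.
      * apply (focused_extend c k s f A D (2 * N) b e); auto.
        -- intros i t Hi Ht. apply (Hblk i t Hi). lia.
        -- intros j Hj Hhit. apply Hmiss. now exists j.
      * nia.
Qed.

Lemma vdw_step k : 1 <= k -> vdw_holds k -> vdw_holds (S k).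
Proof.
  intros Hk Hv T cols.
  assert (Hfocus : focusing k cols (length cols)).
  { induction (length cols); [apply focusing0|apply focusing_step; auto]. }
  destruct Hfocus as [N [HN HF]].
  exists (4 * N). intros c Hc.
  destruct (HF c Hc) as [Hap|[f [A [D [Hf Hfoc]]]]]; [exact Hap|].
  destruct (classic (exists j, j < length cols /\ c (A j) = c f))
    as [[j [Hj Hhit]]|Hmiss].
  - destruct (Hfoc j Hj) as [HD [HAf _]].
    exists (A j), (D j). split; [exact HD|split; [nia|]].
    exact (focused_hit c k _ f A D j Hfoc Hj Hhit).
  - exfalso. apply (Nat.lt_irrefl (length cols)).
    apply (focused_miss_lt_length cols c k _ f A D Hc Hfoc).
    intros j Hj Hhit. apply Hmiss. now exists j.
Qed.

Theorem van_der_waerden k : 1 <= k -> vdw_holds k.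
Proof.
  intros Hk. induction k as [|k IH]; [lia|].
  destruct k; [apply vdw1|]. apply vdw_step; [lia|apply IH; lia].
Qed.

End VanDerWaerden.

Definition mono_solution_upto (a : list Z) (M : Z) (c : Z -> nat) : Prop :=
  exists x, length x = length a /\ Forall (fun y => 0 < y <= M) x /\
    lin_form a x = 0 /\ exists k, Forall (fun y => c y = k) x.

Lemma mono_solution_upto_le a M M' c :
  M <= M' -> mono_solution_upto a M c -> mono_solution_upto a M' c.
Proof.
  intros HM [x [Hl [Hx Hsol]]]. exists x. split; [exact Hl|split; [|exact Hsol]].
  eapply Forall_impl; [|exact Hx]. simpl; intros; lia.
Qed.

Lemma mono_solution_upto_agree a M c c' :
  (forall y, 0 < y <= M -> c' y = c y) ->
  mono_solution_upto a M c -> mono_solution_upto a M c'.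
Proof.
  intros Hag [x [Hl [Hx [Hlin [k Hk]]]]].
  exists x. split; [exact Hl|split; [exact Hx|split; [exact Hlin|exists k]]].
  rewrite Forall_forall in *. intros y Hy. rewrite Hag; auto.
Qed.

Lemma uniform_bound (P : nat -> nat -> Prop) r :
  (forall k, (k < r)%nat -> exists m, P k m) ->
  exists B, forall k, (k < r)%nat -> exists m, (m <= B)%nat /\ P k m.
Proof.
  induction r as [|r IH]; intros H.
  - exists 0%nat. intros; lia.
  - destruct IH as [B HB]; [intros k Hk; apply H; lia|].
    destruct (H r ltac:(lia)) as [m Hm].
    exists (Nat.max B m). intros k Hk.
    destruct (Nat.eq_dec k r) as [->|Hne].
    + exists m; split; [lia|exact Hm].
    + destruct (HB k ltac:(lia)) as [m' [Hm' Hp]]. exists m'; split; [lia|exact Hp].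
Qed.

Definition upd (p : Z -> nat) (m : Z) (k : nat) : Z -> nat :=
  fun y => if Z.eq_dec y m then k else p y.

(* Koenig's lemma for the finitely branching tree of partial colourings of
   [1, n] that still extend to colourings without monochromatic solutions in
   [1, M] for every [M]. *)
Section Compactness.
Variables (r : nat) (a : list Z).

Definition extendable (p : Z -> nat) (n : nat) : Prop :=
  forall M : nat, (n <= M)%nat -> exists c', coloring r c' /\
    (forall y, 0 < y <= Z.of_nat n -> c' y = p y) /\
    ~ mono_solution_upto a (Z.of_nat M) c'.

Lemma extendable_agree p q n :
  (forall y, 0 < y <= Z.of_nat n -> q y = p y) -> extendable p n -> extendable q n.
Proof.
  intros Hpq Hp M HM. destruct (Hp M HM) as [c' [Hc' [Hag Hno]]].
  exists c'. split; [exact Hc'|split; [|exact Hno]].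
  intros y Hy. rewrite Hpq; auto.
Qed.

Lemma extendable_step p n : extendable p n ->
  exists k, (k < r)%nat /\ extendable (upd p (Z.of_nat (S n)) k) (S n).
Proof.
  intros Hext. apply NNPP. intros Hno.
  assert (Hbad : forall k, (k < r)%nat -> exists m,
     (S n <= m)%nat /\ ~ exists c', coloring r c' /\
       (forall y, 0 < y <= Z.of_nat (S n) -> c' y = upd p (Z.of_nat (S n)) k y) /\
       ~ mono_solution_upto a (Z.of_nat m) c').
  { intros k Hk. apply NNPP. intros H1. apply Hno. exists k. split; [exact Hk|].
    intros M HM. apply NNPP. intros H2. apply H1. now exists M. }
  destruct (uniform_bound _ r Hbad) as [B HB].
  destruct (Hext (Nat.max B (S n)) ltac:(lia)) as [c' [Hcol [Hag Hsol]]].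
  destruct (HB _ (Hcol (Z.of_nat (S n)) ltac:(lia))) as [m [HmB [Hmn Hnot]]].
  apply Hnot. exists c'. split; [exact Hcol|split].
  - intros y Hy. unfold upd.
    destruct (Z.eq_dec y (Z.of_nat (S n))) as [->|Hne]; [reflexivity|].
    apply Hag. lia.
  - intros Hm. apply Hsol. revert Hm. apply mono_solution_upto_le. lia.
Qed.

Definition next_color (p : Z -> nat) (n : nat) : nat :=
  epsilon (inhabits 0%nat)
    (fun k => (k < r)%nat /\ extendable (upd p (Z.of_nat (S n)) k) (S n)).

Fixpoint prefix (n : nat) : Z -> nat :=
  match n with
  | O => fun _ => 0%nat
  | S n' => upd (prefix n') (Z.of_nat n) (next_color (prefix n') n')
  end.

Definition limit_coloring (y : Z) : nat := prefix (Z.to_nat y) y.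

Hypothesis extendable0 : extendable (fun _ => 0%nat) 0.

Lemma next_color_spec n : (next_color (prefix n) n < r)%nat /\ extendable (prefix (S n)) (S n).
Proof.
  induction n as [|n IH].
  - exact (epsilon_spec _ _ (extendable_step _ _ extendable0)).
  - exact (epsilon_spec _ _ (extendable_step _ _ (proj2 IH))).
Qed.

Lemma prefix_stable n m y :
  (m <= n)%nat -> 0 < y <= Z.of_nat m -> prefix n y = prefix m y.
Proof.
  induction n as [|n IH]; intros Hmn Hy.
  - now replace m with 0%nat by lia.
  - destruct (Nat.eq_dec m (S n)) as [->|Hne]; [reflexivity|].
    cbn [prefix]. unfold upd. destruct (Z.eq_dec y (Z.of_nat (S n))); [lia|].
    apply IH; lia.
Qed.

Lemma limit_coloring_coloring : coloring r limit_coloring.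
Proof.
  intros y Hy. unfold limit_coloring.
  destruct (Z.to_nat y) as [|n] eqn:E; [lia|].
  cbn [prefix]. unfold upd. destruct (Z.eq_dec y (Z.of_nat (S n))) as [_|Hne]; [|lia].
  apply next_color_spec.
Qed.

Lemma limit_coloring_extendable n : extendable limit_coloring n.
Proof.
  apply (extendable_agree (prefix n)).
  - intros y Hy. symmetry. apply prefix_stable; lia.
  - destruct n as [|n]; [exact extendable0|apply next_color_spec].
Qed.

End Compactness.

Lemma Z_list_upper_bound (x : list Z) : exists N : nat, Forall (fun y => y <= Z.of_nat N) x.
Proof.
  induction x as [|y x [N HN]]; [exists 0%nat; constructor|].
  exists (Nat.max N (Z.to_nat y)). constructor; [lia|].
  eapply Forall_impl; [|exact HN]. simpl; intros; lia.
Qed.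

Theorem r_regular_bounded r a : r_regular r a ->
  exists M : nat, forall c, coloring r c -> mono_solution_upto a (Z.of_nat M) c.
Proof.
  intros Hreg. apply NNPP. intros Hno.
  assert (H0 : extendable r a (fun _ => 0%nat) 0).
  { intros M _. apply NNPP. intros H. apply Hno. exists M. intros c Hc.
    apply NNPP. intros Hsol. apply H. exists c. split; [exact Hc|split; [lia|exact Hsol]]. }
  set (cs := limit_coloring r a).
  destruct (Hreg cs (limit_coloring_coloring r a H0)) as [x [Hl [Hpos [Hlin Hk]]]].
  destruct (Z_list_upper_bound x) as [N HN].
  destruct (limit_coloring_extendable r a H0 N N (le_n _)) as [c' [_ [Hag Hsol]]].
  apply Hsol, (mono_solution_upto_agree a _ cs); [exact Hag|].
  exists x. split; [exact Hl|split; [|split; [exact Hlin|]]].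
  - rewrite Forall_forall in *. intros y Hy. split; auto.
  - destruct Hk as [k Hk]. exists k. exact Hk.
Qed.

Lemma divide_fact M j : (1 <= j <= M)%nat -> Nat.divide j (fact M).
Proof.
  induction M as [|M IH]; intros Hj; [lia|].
  destruct (Nat.eq_dec j (S M)) as [->|Hne].
  - exists (fact M). simpl. lia.
  - destruct (IH ltac:(lia)) as [q Hq]. exists (S M * q)%nat.
    change (fact (S M)) with (S M * fact M)%nat. rewrite Hq. lia.
Qed.

Lemma lin_form_scale a x u :
  lin_form a (map (fun y => y * u) x) = lin_form a x * u.
Proof.
  revert x; induction a as [|ai a IH]; intros [|xi x]; simpl; try ring.
  rewrite IH. ring.
Qed.

(* Van der Waerden gives a progression [a0 + 1 + i d0], [i <= 2 L M!], along
   which every colour [c (j (a0 + 1 + i d0))], [1 <= j <= M], is constant.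
   Take [b = a0 + 1 + L M! d0] and [e = M! d0]: since [y] divides [M!],
   [y b + lam e = y (a0 + 1 + (L M! + lam M!/y) d0)] stays on the progression. *)
Lemma monochromatic_dilations r (c : Z -> nat) (M L : nat) : coloring r c ->
  exists b e, 0 < b /\ 0 < e /\ forall y lam,
    1 <= y <= Z.of_nat M -> Z.abs lam <= Z.of_nat L ->
    0 < y * b + lam * e /\ c (y * b + lam * e) = c (y * b).
Proof.
  intros Hc. set (F := fact M). set (K := (2 * L * F + 1)%nat).
  destruct (vdw_columns K M 1 (seq 0 r) (van_der_waerden K ltac:(lia))) as [W HW].
  destruct (HW (fun b j => c (Z.of_nat j * Z.of_nat (S b)))) as [a0 [d0 [Hd0 [_ Hcol]]]].
  { intros b j Hj. apply in_seq. split; [lia|apply Hc; lia]. }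
  assert (HF : (0 < F)%nat) by apply lt_O_fact.
  set (b := Z.of_nat (S (a0 + L * F * d0))). set (e := Z.of_nat (F * d0)).
  assert (Hon_progression : forall y lam, 1 <= y <= Z.of_nat M ->
    Z.abs lam <= Z.of_nat L -> c (y * b + lam * e) = c (y * Z.of_nat (S a0))).
  { intros y lam Hy Hlam.
    destruct (divide_fact M (Z.to_nat y) ltac:(lia)) as [q Hq].
    assert (Hqy : Z.of_nat F = Z.of_nat q * y) by lia.
    assert (Hq_le : 0 <= Z.of_nat q <= Z.of_nat F) by nia.
    set (i := Z.of_nat L * Z.of_nat F + lam * Z.of_nat q).
    assert (Hi : 0 <= i <= 2 * Z.of_nat L * Z.of_nat F) by (unfold i; split; nia).
    assert (Hyb : y * b + lam * e = Z.of_nat (Z.to_nat y) * Z.of_nat (S (a0 + Z.to_nat i * d0))).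
    { unfold b, e, i. rewrite !Nat2Z.inj_succ, !Nat2Z.inj_add, !Nat2Z.inj_mul.
      rewrite !Z2Nat.id by lia. rewrite Hqy. ring. }
    rewrite Hyb, (Hcol (Z.to_nat i) (Z.to_nat y)) by lia.
    now rewrite Z2Nat.id by lia. }
  exists b, e. split; [lia|split; [nia|]]. intros y lam Hy Hlam.
  split; [nia|]. rewrite Hon_progression by lia.
  rewrite <- (Hon_progression y 0) by lia. f_equal. ring.
Qed.

(* The coefficients need not be nonzero, and [0 < r], [0 < C] are not used. *)
Theorem lemma1 (r : nat) (a : list Z) (C : R) :
  (0 < r)%nat ->
  Forall (fun ai => ai <> 0) a ->
  r_regular r a ->
  (0 < C)%R ->
  forall c : Z -> nat, coloring r c ->
    exists (x : list Z) (d : Z),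
      length x = length a /\ Forall (fun y => 0 < y) x /\
      lin_form a x = 0 /\ 0 < d /\
      exists k : nat,
        forall xi lam, In xi x -> (Rabs (IZR lam) <= C)%R ->
          0 < xi + lam * d /\ c (xi + lam * d) = k.
Proof.
  intros _ _ Hreg _ c Hc.
  destruct (r_regular_bounded r a Hreg) as [M HM].
  destruct (monochromatic_dilations r c M (Z.to_nat (up C)) Hc) as [b [e [Hb [He Hdil]]]].
  assert (Hcb : coloring r (fun y => c (y * b))) by (intros y Hy; apply Hc; nia).
  destruct (HM _ Hcb) as [x [Hl [Hx [Hlin [k Hk]]]]].
  rewrite Forall_forall in Hx, Hk.
  exists (map (fun y => y * b) x), e. split; [now rewrite length_map|].
  split; [|split; [now rewrite lin_form_scale, Hlin|split; [exact He|exists k]]].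
  - apply Forall_forall. intros z Hz. apply in_map_iff in Hz.
    destruct Hz as [y [<- Hy]]. specialize (Hx y Hy). nia.
  - intros z lam Hz Hlam. apply in_map_iff in Hz. destruct Hz as [y [<- Hy]].
    assert (Hlam_up : Z.abs lam < up C).
    { destruct (archimed C) as [Hup _]. apply lt_IZR. rewrite <- Rabs_Zabs. lra. }
    rewrite <- (Hk y Hy). specialize (Hx y Hy). apply Hdil; lia.
Qed.
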